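(* Let $n\ge0$, $a_{n,0},\dots,a_{n,n}\in\mathbb C$, and let $P_n(z)=\sum_{r=0}^n b_{n,r}z^r$ be the associated polynomial. Then all coefficients $b_{n,r}$ are real if and only if $a_{n,k}=\overline{a_{n,n-k}}$ for all $0\le k\le n$ (bar denoting complex conjugation).
   Context: $\imath=\sqrt{-1}$. $\mathcal{A}$ denotes the quotient of the free associative $\mathbb{C}$-algebra on two noncommuting generators $p,q$ by the two-sided ideal generated by $qp-pq-\imath$, and $z=\tfrac12(qp+pq)\in\mathcal A$. For $n\ge0$ and complex numbers $a_{n,0},\dots,a_{n,n}$, there is a unique polynomial $P_n\in\mathbb{C}[X]$ of degree at most $n$ with $\sum_{k=0}^n a_{n,k}q^kp^nq^{n-k}=P_n(z)$ in $\mathcal A$; it is called the polynomial associated to $\{a_{n,k}\}$. *)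

From HB Require Import structures.
From mathcomp Require Import all_boot all_order all_algebra.
Set Implicit Arguments. Unset Strict Implicit. Unset Printing Implicit Defensive.
Import Order.TTheory GRing.Theory Num.Theory.
Local Open Scope ring_scope.

(* The Weyl algebra A = C<p,q>/(qp - pq - i), realised through its
   faithful Schroedinger representation on C[X]:
     q = multiplication by X,   p = - i d/dX,
   so that (qp - pq) f = i f.  Elements of A are represented as operators
   {poly C} -> {poly C}; equality in A is equality of operators. *)

Section Weyl.
Variable C : numClosedFieldType.

Definition wq (f : {poly C}) : {poly C} := 'X * f.
Definition wp (f : {poly C}) : {poly C} := (- 'i) *: f^`().

Definition wz (f : {poly C}) : {poly C} := 2^-1 *: (wq (wp f) + wp (wq f)).

Definition wmon (n k : nat) (f : {poly C}) : {poly C} :=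
  iter k wq (iter n wp (iter (n - k) wq f)).

Definition wsum (n : nat) (a : nat -> C) (f : {poly C}) : {poly C} :=
  \sum_(k < n.+1) a k *: wmon n k f.

Definition wpolyz (P : {poly C}) (f : {poly C}) : {poly C} :=
  \sum_(r < size P) P`_r *: iter r wz f.

Definition associated_poly (n : nat) (a : nat -> C) (P : {poly C}) : Prop :=
  (size P <= n.+1)%N /\ forall f : {poly C}, wsum n a f = wpolyz P f.
End Weyl.

From HB Require Import structures.
From mathcomp Require Import all_boot all_order all_algebra.
From mathcomp Require Import ring zify.
Set Implicit Arguments.
Unset Strict Implicit.
Unset Printing Implicit Defensive.
Import Order.TTheory GRing.Theory Num.Theory.
Local Open Scope ring_scope.

(** The monomials X^m diagonalise the whole computation: z acts on X^m by the
    scalar zeigen m = -i(m + 1/2) and q^k p^n q^(n-k) by (-i)^n (m+n-k)^_n.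
    Hence P(zeigen t) = R_a(t) for the explicit polynomial
    R_a(t) = sum_k a_k (-i)^n prod_(j<n) (t + n - k - j), first at every natural
    t and then identically.  Conjugation satisfies zeigen(t)^* = zeigen(-t^*-1)
    and R_a(t)^* = R_b(-t^*-1) with b_k = a_(n-k)^*, so the coefficientwise
    conjugate of P satisfies P^*(zeigen t) = R_b(t).  Thus P is real iff
    R_a = R_b, and since the values of R_a at 0, ..., n determine a_0, ..., a_n
    through a triangular system with diagonal n!, iff a = b. *)

Section AssociatedPolynomial.
Variable C : numClosedFieldType.
Implicit Types (f P : {poly C}) (a : nat -> C) (t : C).

Lemma poly_eq_on_injective (g : nat -> C) N (p q : {poly C}) :
  injective g -> (size p <= N)%N -> (size q <= N)%N ->
  (forall i, (i < N)%N -> p.[g i] = q.[g i]) -> p = q.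
Proof.
move=> g_inj sp sq pq; apply/eqP; rewrite -subr_eq0; apply/eqP.
apply: (@roots_geq_poly_eq0 _ _ (map g (iota 0 N))).
- apply/allP => x /mapP[i]; rewrite mem_iota add0n => /andP[_ iN] ->.
  by rewrite /root !hornerE pq ?subrr.
- by rewrite map_inj_uniq ?iota_uniq.
- rewrite size_map size_iota; apply: leq_trans (size_polyD _ _) _.
  by rewrite size_polyN geq_max sp sq.
Qed.

Lemma iter_wq r f : iter r (@wq C) f = 'X^r * f.
Proof. by elim: r => [|r IH] /=; rewrite ?mul1r // IH /wq exprS mulrA. Qed.

Lemma iter_wp r f : iter r (@wp C) f = (- 'i) ^+ r *: f^`(r).
Proof. by elim: r => [|r IH] /=; rewrite ?scale1r // IH /wp derivZ scalerA -exprS. Qed.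

Lemma wqZ c f : wq (c *: f) = c *: wq f.
Proof. by rewrite /wq scalerAr. Qed.

Lemma wpZ c f : wp (c *: f) = c *: wp f.
Proof. by rewrite /wp derivZ !scalerA mulrC. Qed.

Lemma wzZ c f : wz (c *: f) = c *: wz f.
Proof. by rewrite /wz !(wqZ, wpZ) -scalerDr !scalerA mulrC. Qed.

Definition zeigen t := - 'i * (t + 2^-1).

Lemma zeigen_conj t : (zeigen t)^* = zeigen (- t^* - 1).
Proof.
by rewrite /zeigen rmorphM rmorphN /= conjCi rmorphD fmorphV rmorph_nat /=; field.
Qed.

Lemma zeigen_nat_inj : injective (fun m : nat => zeigen m%:R).
Proof.
have ni_neq0 : - 'i != 0 :> C by rewrite oppr_eq0 neq0Ci.
by move=> i j /(mulfI ni_neq0)/addIr/eqP; rewrite eqr_nat => /eqP.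
Qed.

Lemma wz_Xn m : wz ('X^m : {poly C}) = zeigen m%:R *: 'X^m.
Proof.
rewrite /wz /wq /wp !derivXn /= -!scaler_nat -!scalerAr -!exprS !derivXn /=.
apply/polyP => j; rewrite /zeigen !coefE.
by case: m => [|m] /=; rewrite ?coefE; case: (j == _); field.
Qed.

Lemma iter_wz_Xn r m : iter r (@wz C) 'X^m = zeigen m%:R ^+ r *: 'X^m.
Proof.
elim: r => [|r IH] /=; first by rewrite scale1r.
by rewrite IH wzZ wz_Xn scalerA exprSr.
Qed.

Lemma wpolyz_Xn P m : wpolyz P 'X^m = P.[zeigen m%:R] *: 'X^m.
Proof.
rewrite /wpolyz horner_coef scaler_suml; apply: eq_bigr => r _.
by rewrite iter_wz_Xn scalerA.
Qed.

Lemma wmon_Xn n k m : (k <= n)%N ->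
  wmon n k ('X^m : {poly C}) = ((- 'i) ^+ n * ((m + (n - k)) ^_ n)%:R) *: 'X^m.
Proof.
move=> kn; rewrite /wmon !iter_wq iter_wp -exprD derivnXn -scalerAr.
rewrite [in LHS]mulrnAr -scalerA scaler_nat addnC.
have [nm | mn] := leqP n (m + (n - k)); last by rewrite ffact_small // !mulr0n scaler0.
by rewrite -exprD; congr (_ *: (_ *+ _)); congr 'X^_; lia.
Qed.

Lemma wsum_Xn n a m : wsum n a 'X^m =
  (\sum_(k < n.+1) a k * ((- 'i) ^+ n * ((m + (n - k)) ^_ n)%:R)) *: 'X^m.
Proof.
rewrite /wsum scaler_suml; apply: eq_bigr => k _.
by rewrite wmon_Xn ?scalerA // -ltnS.
Qed.

Lemma associated_poly_zeigen_nat n a P : associated_poly n a P -> forall m : nat,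
  P.[zeigen m%:R] = \sum_(k < n.+1) a k * ((- 'i) ^+ n * ((m + (n - k)) ^_ n)%:R).
Proof.
move=> [_ aP] m; have /(congr1 (coefp m)) := aP 'X^m.
by rewrite wsum_Xn wpolyz_Xn /= !coefZ coefXn eqxx !mulr1 => ->.
Qed.

Definition ffact_poly (d n : nat) : {poly C} :=
  \prod_(j < n) ('X + (d%:R - j%:R)%:P).

Lemma horner_ffact_poly d n t :
  (ffact_poly d n).[t] = \prod_(j < n) (t + (d%:R - j%:R)).
Proof. by rewrite horner_prod; apply: eq_bigr => j _; rewrite !hornerE. Qed.

Lemma size_ffact_poly d n : (size (ffact_poly d n) <= n.+1)%N.
Proof.
apply: leq_trans (size_poly_prod_leq _ _) _.
rewrite (eq_bigr (fun _ => 2%N)) => [|j _]; last by rewrite size_XaddC.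
by rewrite sum_nat_const card_ord; lia.
Qed.

Lemma ffact_poly_nat d n m : (ffact_poly d n).[m%:R] = ((m + d) ^_ n)%:R.
Proof.
rewrite horner_ffact_poly; have [nmd | mdn] := leqP n (m + d).
  rewrite ffact_prod natr_prod; apply: eq_bigr => j _.
  by rewrite natrB ?natrD ?addrA //; have := ltn_ord j; lia.
rewrite ffact_small // (bigD1 (Ordinal mdn)) //= natrD.
by rewrite addrA subrr mul0r.
Qed.

Lemma ffact_poly_reflect d n t : (d <= n)%N ->
  (ffact_poly d n).[- t - 1] = (-1) ^+ n * (ffact_poly (n - d) n).[t].
Proof.
move=> dn; rewrite !horner_ffact_poly (reindex_inj rev_ord_inj) /=.
rewrite -[in (-1) ^+ n](card_ord n) -prodrN; apply: eq_bigr => j _.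
by rewrite natrB // natrB ?natr1 ?natrD; [ring | have := ltn_ord j; lia].
Qed.

Lemma ffact_poly_conj d n t : ((ffact_poly d n).[t])^* = (ffact_poly d n).[t^*].
Proof.
rewrite !horner_ffact_poly rmorph_prod; apply: eq_bigr => j _.
by rewrite rmorphD rmorphB !rmorph_nat.
Qed.

Definition assoc_symbol n a : {poly C} :=
  \sum_(k < n.+1) (a k * (- 'i) ^+ n) *: ffact_poly (n - k) n.

Definition conj_rev n a k := (a (n - k)%N)^*.

Lemma size_assoc_symbol n a : (size (assoc_symbol n a) <= n.+1)%N.
Proof.
apply: (big_ind (fun p : {poly C} => size p <= n.+1)%N) => [|p q sp sq|k _].
- by rewrite size_poly0.
- by apply: leq_trans (size_polyD _ _) _; rewrite geq_max sp sq.
- exact: leq_trans (size_scale_leq _ _) (size_ffact_poly _ _).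
Qed.

Lemma assoc_symbol_nat n a m : (assoc_symbol n a).[m%:R] =
  \sum_(k < n.+1) a k * ((- 'i) ^+ n * ((m + (n - k)) ^_ n)%:R).
Proof.
rewrite horner_sum; apply: eq_bigr => k _.
by rewrite hornerZ ffact_poly_nat mulrA.
Qed.

Lemma assoc_symbol_conj n a t :
  ((assoc_symbol n a).[t])^* = (assoc_symbol n (conj_rev n a)).[- t^* - 1].
Proof.
rewrite !horner_sum rmorph_sum (reindex_inj rev_ord_inj) /=; apply: eq_bigr => k _.
have kn : (k <= n)%N by rewrite -ltnS.
rewrite !hornerZ ffact_poly_reflect ?leq_subr // subKn // subSS.
rewrite -ffact_poly_conj !rmorphM rmorphXn rmorphN /= conjCi /conj_rev.
by rewrite -!mulrA; congr (_ * _); rewrite mulrA -exprMn mulrN1.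
Qed.

Lemma assoc_symbol_inj n a b :
  (forall m, (m <= n)%N -> (assoc_symbol n a).[m%:R] = (assoc_symbol n b).[m%:R]) ->
  forall k, (k <= n)%N -> a k = b k.
Proof.
move=> ab; elim/ltn_ind => k IH kn; apply/eqP; rewrite -subr_eq0.
move/eqP: (ab k kn); rewrite !assoc_symbol_nat -subr_eq0 -sumrB.
have kn1 : (k < n.+1)%N by [].
rewrite (bigD1 (Ordinal kn1)) //= big1 => [|i ik].
  have cn0 : (- 'i) ^+ n * (n`!)%:R != 0 :> C.
    by rewrite mulf_neq0 ?expf_neq0 ?oppr_eq0 ?neq0Ci // pnatr_eq0 -lt0n fact_gt0.
  by rewrite addr0 -mulrBl subnKC // ffactnn mulf_eq0 (negbTE cn0) orbF.
have [lt_ki | lt_ik | eq_ki] := ltngtP k i.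
- by rewrite ffact_small ?mulr0 ?subrr //; have := ltn_ord i; lia.
- by rewrite IH ?subrr //; lia.
- by move: ik; rewrite -val_eqE /= eq_ki eqxx.
Qed.

Lemma horner_associated_poly n a P t :
  associated_poly n a P -> P.[zeigen t] = (assoc_symbol n a).[t].
Proof.
move=> aP; pose L : {poly C} := - 'i *: ('X + (2^-1)%:P).
have L_zeigen s : L.[s] = zeigen s by rewrite !hornerE.
have size_L : size L = 2%N by rewrite size_scale ?size_XaddC // oppr_eq0 neq0Ci.
suff <- : P \Po L = assoc_symbol n a by rewrite horner_comp L_zeigen.
apply: (@poly_eq_on_injective (fun m => m%:R) n.+1).
- by move=> i j /eqP; rewrite eqr_nat => /eqP.
- by rewrite size_comp_poly2 //; case: aP.
- exact: size_assoc_symbol.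
- move=> m _; rewrite horner_comp L_zeigen (associated_poly_zeigen_nat aP).
  by rewrite assoc_symbol_nat.
Qed.

Lemma horner_conj_associated_poly n a P t : associated_poly n a P ->
  (map_poly Num.conj P).[zeigen t] = (assoc_symbol n (conj_rev n a)).[t].
Proof.
have reflK (s : C) : - (- s^* - 1)^* - 1 = s.
  by rewrite rmorphB rmorphN rmorph1 /= conjCK; ring.
move=> aP; rewrite -[in LHS](reflK t) -zeigen_conj horner_map /=.
by rewrite (horner_associated_poly _ aP) assoc_symbol_conj reflK.
Qed.

Lemma map_poly_conj_idP P : map_poly Num.conj P = P <-> forall r, P`_r \is Num.real.
Proof.
split=> [PcP r | Preal]; first by apply/CrealP; rewrite -[in RHS]PcP coef_map.
by apply/polyP => r; rewrite coef_map /=; apply/CrealP.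
Qed.

End AssociatedPolynomial.

Theorem theorem4p3 (C : numClosedFieldType) (n : nat) (a : nat -> C)
  (P : {poly C}) (hP : associated_poly n a P) :
  (forall r : nat, P`_r \is Num.real) <->
  (forall k : nat, (k <= n)%N -> a k = (a (n - k)%N)^*).
Proof.
rewrite -map_poly_conj_idP; split => [PcP | a_sym].
  apply: (@assoc_symbol_inj _ _ _ (conj_rev n a)) => m _.
  by rewrite -(horner_associated_poly _ hP) -(horner_conj_associated_poly _ hP) PcP.
have sym_symbol : assoc_symbol n (conj_rev n a) = assoc_symbol n a.
  by apply: eq_bigr => k _; rewrite /conj_rev -a_sym // -ltnS.
apply: (@poly_eq_on_injective _ _ n.+1 _ _ (@zeigen_nat_inj C)).
- by rewrite size_map_poly; case: hP.
- by case: hP.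
- move=> m _; rewrite (horner_conj_associated_poly _ hP) sym_symbol.
  by rewrite (horner_associated_poly _ hP).
Qed.
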